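(* Let $F$ be a digraph that is $\delta^+$-maderian and has the Erdős–Pósa Property. Then for every positive integer $k$, the digraph $k\times F$ is $\delta^+$-maderian.
   Context: A subdivision of a digraph $F$ is obtained by replacing each arc $(x,y)$ by a directed $(x,y)$-path, internally disjoint with new internal vertices. A digraph $F$ is $\delta^+$-maderian if there exists an integer $c$ such that every digraph with minimum out-degree at least $c$ contains a subdivision of $F$ as a subdigraph. $k\times F$ denotes the disjoint union of $k$ copies of $F$. $F$ has the Erdős–Pósa Property if for every positive integer $k$ there exists $\phi(k)$ such that every digraph $D$ either contains a subdivision of $k\times F$, or has a vertex set $S$ with $|S|\le\phi(k)$ such that $D-S$ contains no subdivision of $F$. *)

From mathcomp Require Import all_boot.
Set Implicit Arguments. Unset Strict Implicit. Unset Printing Implicit Defensive.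

(* A (finite) digraph: finite vertex set, arc relation, no loops.
   Digons (x->y and y->x) allowed; no parallel arcs. *)
Record digraph := Digraph {
  dvert : finType;
  darc : rel dvert;
  darc_irr : irreflexive darc }.
Arguments darc : clear implicits.
Arguments darc_irr : clear implicits.

(* D contains a subdivision of F as a subdigraph: an injective placement f of
   the vertices of F, and for each arc (x,y) of F a list P x y of internal
   vertices forming a directed (f x, f y)-path; internal vertices are new
   (not branch vertices) and the paths are pairwise internally disjoint. *)
Definition contains_subdiv (F D : digraph) : Prop :=
  exists (f : dvert F -> dvert D) (P : dvert F -> dvert F -> seq (dvert D)),
    [/\ injective f,
        (forall x y, darc F x y ->
           [/\ path (darc D) (f x) (rcons (P x y) (f y)),
               uniq (P x y) &
               forall v, v \in P x y -> forall z, v != f z]) &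
        (forall x y x' y', darc F x y -> darc F x' y' -> (x, y) != (x', y') ->
           forall v, v \in P x y -> v \notin P x' y')].

Definition min_outdeg_ge (D : digraph) (c : nat) : Prop :=
  forall v : dvert D, c <= #|[set w | darc D v w]|.

(* delta^+-maderian (digraphs considered are non-empty, so that the minimum
   out-degree is defined) *)
Definition maderian (F : digraph) : Prop :=
  exists c : nat, forall D : digraph,
    0 < #|dvert D| -> min_outdeg_ge D c -> contains_subdiv F D.

Definition copies_arc (k : nat) (F : digraph) : rel ('I_k * dvert F)%type :=
  fun u v => (u.1 == v.1) && darc F u.2 v.2.

Lemma copies_arc_irr k F : irreflexive (@copies_arc k F).
Proof. by move=> u; rewrite /copies_arc eqxx (darc_irr F). Qed.

Definition copies (k : nat) (F : digraph) : digraph :=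
  @Digraph ('I_k * dvert F)%type (@copies_arc k F) (@copies_arc_irr k F).

Definition del_arc (D : digraph) (S : {set dvert D}) :
  rel {v : dvert D | v \notin S} := fun u v => darc D (val u) (val v).

Lemma del_arc_irr D S : irreflexive (@del_arc D S).
Proof. by move=> u; rewrite /del_arc (darc_irr D). Qed.

Definition del (D : digraph) (S : {set dvert D}) : digraph :=
  @Digraph {v : dvert D | v \notin S} (@del_arc D S) (@del_arc_irr D S).

Definition erdos_posa (F : digraph) : Prop :=
  forall k : nat, 0 < k -> exists phi : nat, forall D : digraph,
    contains_subdiv (copies k F) D \/
    exists S : {set dvert D}, #|S| <= phi /\ ~ contains_subdiv F (del S).

From mathcomp Require Import all_boot.
From mathcomp Require Import zify.

Set Implicit Arguments. Unset Strict Implicit. Unset Printing Implicit Defensive.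

(* Take the degree bound c + phi, with c witnessing that F is maderian and phi
   the Erdős–Pósa bound for k copies.  If D has no subdivision of k x F, some
   set S of at most phi vertices meets every subdivision of F; but deleting S
   costs each vertex at most phi out-neighbours, so D - S has minimum
   out-degree at least c, and it is nonempty because a loopless digraph of
   minimum out-degree c + phi has more than c + phi vertices.  Hence D - S
   contains a subdivision of F after all. *)

Lemma min_outdeg_lt_card (D : digraph) (c : nat) :
  0 < #|dvert D| -> min_outdeg_ge D c -> c < #|dvert D|.
Proof.
case/card_gt0P=> v _ /(_ v) deg_v; apply: leq_ltn_trans deg_v _.
rewrite -cardsT; apply: proper_card; rewrite properT.
by apply/eqP=> /setP/(_ v); rewrite !inE darc_irr.
Qed.

Lemma card_del (D : digraph) (S : {set dvert D}) :
  #|dvert (del S)| = #|dvert D| - #|S|.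
Proof. by rewrite card_sig -(cardsC S) addKn; apply: eq_card => v; rewrite !inE. Qed.

Lemma outdeg_del (D : digraph) (S : {set dvert D}) (v : dvert (del S)) :
  #|[set w | darc D (val v) w]| - #|S| <=
  #|[set w : dvert (del S) | darc (del S) v w]|.
Proof.
set N := [set w | darc D (val v) w].
have : #|N| - #|S| <= #|N :\: S|.
  by rewrite cardsD; have := subset_leq_card (subsetIr N S); lia.
move/leq_trans; apply; rewrite -(card_imset _ val_inj).
apply/subset_leq_card/subsetP => w; rewrite !inE => /andP[wS wN].
by apply/imsetP; exists (exist _ w wS); rewrite ?inE.
Qed.

Lemma min_outdeg_ge_del (D : digraph) (S : {set dvert D}) (c s : nat) :
  #|S| <= s -> min_outdeg_ge D (c + s) -> min_outdeg_ge (del S) c.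
Proof. by move=> Ss degD v; have := outdeg_del v; have := degD (val v); lia. Qed.

Theorem theorem8 (F : digraph) :
  maderian F -> erdos_posa F -> forall k : nat, 0 < k -> maderian (copies k F).
Proof.
move=> [c madF] EP k k_gt0; have [phi EPk] := EP k k_gt0.
exists (c + phi) => D D_gt0 degD.
case: (EPk D) => // -[S [S_phi noF]]; exfalso; apply/noF/madF.
- rewrite card_del subn_gt0; apply: leq_ltn_trans S_phi _.
  exact: leq_ltn_trans (leq_addl c phi) (min_outdeg_lt_card D_gt0 degD).
- exact: min_outdeg_ge_del S_phi degD.
Qed.
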